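(* Let $\mathcal R_1\subseteq\mathcal R$ be a finite collection with the property: whenever $R,R'\in\mathcal R_1$ are distinct, $R\cap R'\ne\emptyset$ and $L(R)\le L(R')$, then $\mathrm{slope}(R)\not\supseteq\mathrm{slope}(R')$. Then for every $x\in[0,1)$ and every $y\in\mathbb R$, $$\#\{R\in\mathcal R_1:(x,y)\in R\}\ \le\ g(x)\ \le\ \frac1\delta\,h(x).$$
   Context: Dyadic model. Fix $0<\delta\le1$ and $w=2^{-m}$ for an integer $m\ge1$. All dyadic intervals are half-open. For $k\ge0$, $S_k$ is the set of dyadic subintervals of $[0,1)$ of length $2^{-k}$ (slopes); $c_s$ is the center of $s$. Let $u:[0,1)\to S_m$ be measurable. Let $\mathcal D$ be the dyadic intervals $I\subseteq[0,1)$ with $|I|\ge w$, $k(I)=\log_2(|I|/w)$, $\mathrm{Pop}_I(s)=\frac1{|I|}|\{x\in I:u(x)\subseteq s\}|$, $S(I)=\{s\in S_{k(I)}:\mathrm{Pop}_I(s)\ge\delta\}$. The parallelogram $P(I,s,b)=\{(x,y):x\in I,\ b\le y-c_sx<b+w\}$ ($I\in\mathcal D$, $s\in S_{k(I)}$, $b\in\mathbb R$) has $\mathrm{int}(P)=I$, $\mathrm{slope}(P)=s$, $L(P)=|I|$; $\mathcal R$ is the collection of these with $s\in S(I)$. Define $T(I)$ for $I\in\mathcal D$ recursively from larger to smaller intervals: $T([0,1))=S([0,1))$, and $T(I)=\{s\in S(I):$ there is no $K\in\mathcal D$ with $K\supsetneq I$ and $s'\in T(K)$ with $s\supseteq s'\}$.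 For $s\in T(I)$ let $\mu_I^s=|\{x\in I:u(x)\subseteq s\}|$, and let $\mu_I=\sum_{s\in T(I)}\mu_I^s$. Define $g(x)=\sum_{I\in\mathcal D}\chi_I(x)\,\#T(I)$ and $h(x)=\sum_{I\in\mathcal D}\chi_I(x)\frac{\mu_I}{|I|}$. *)

From Stdlib Require Import Reals List ClassicalEpsilon.
Open Scope R_scope.

Definition rsum (n : nat) (f : nat -> R) : R :=
  fold_right Rplus 0 (map f (seq 0 n)).

Definition ind (P : Prop) : R :=
  if excluded_middle_informative P then 1 else 0.

Definition decb (P : Prop) : bool :=
  if excluded_middle_informative P then true else false.

Definition cnt (n : nat) (P : nat -> Prop) : nat :=
  length (filter (fun j => decb (P j)) (seq 0 n)).

(* the dyadic interval of level k and index j is [j 2^-k, (j+1) 2^-k);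
   it is a subinterval of [0,1) iff j < 2^k *)
Definition dyin (k j : nat) (x : R) : Prop :=
  INR j / 2 ^ k <= x < (INR j + 1) / 2 ^ k.

Definition dyadic_ok (k j : nat) : Prop := (j < 2 ^ k)%nat.

Definition dsub (k j k' j' : nat) : Prop :=
  forall x : R, dyin k' j' x -> dyin k j x.

Definition center (k j : nat) : R := (INR j + / 2) / 2 ^ k.

Definition dlen (n : nat) : R := / 2 ^ n.

(* ---------- the model ----------
   Parameters: m (w = 2^-m), delta, and the distribution of u:
   a c t = | { x in cell c : u(x) = t } |, where the cell c is the dyadic
   interval of level m and index c, and t is the slope of S_m with index t.
   An interval I in D is (n,i) with n <= m, i < 2^n; |I| = 2^-n, k(I) = m-n. *)

Definition wid (m : nat) : R := / 2 ^ m.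

(* | { x in I : u(x) ⊆ s } |  for I = (n,i), s = (k,j) *)
Definition musub (m : nat) (a : nat -> nat -> R) (n i k j : nat) : R :=
  rsum (2 ^ m) (fun c => rsum (2 ^ m) (fun t =>
     ind (dsub n i m c /\ dsub k j m t) * a c t)).

Definition Pop (m : nat) (a : nat -> nat -> R) (n i k j : nat) : R :=
  / dlen n * musub m a n i k j.

(* s = (m-n, j) belongs to S(I), I = (n,i) *)
Definition inS (m : nat) (delta : R) (a : nat -> nat -> R) (n i j : nat) : Prop :=
  dyadic_ok (m - n) j /\ delta <= Pop m a n i (m - n) j.

(* Tpre ... p n' i j  : slope j is in T(I) for I = (n',i), valid for levels n' < p *)
Fixpoint Tpre (m : nat) (delta : R) (a : nat -> nat -> R) (p : nat)
  : nat -> nat -> nat -> Prop :=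
  match p with
  | O => fun _ _ _ => False
  | S q => fun n' i j =>
      if Nat.ltb n' q then Tpre m delta a q n' i j
      else if Nat.eqb n' q then
        inS m delta a q i j /\
        ~ (exists n'' i'' j'',
             (n'' < q)%nat /\ dyadic_ok n'' i'' /\ dsub n'' i'' q i /\
             Tpre m delta a q n'' i'' j'' /\
             dsub (m - q) j (m - n'') j'')
      else False
  end.

Definition inT (m : nat) (delta : R) (a : nat -> nat -> R) (n i j : nat) : Prop :=
  Tpre m delta a (S n) n i j.

Definition cardT m delta a n i : nat := cnt (2 ^ (m - n)) (inT m delta a n i).

Definition muI m delta a n i : R :=
  rsum (2 ^ (m - n)) (fun j => ind (inT m delta a n i j) * musub m a n i (m - n) j).

Definition gfun m delta a (x : R) : R :=
  rsum (S m) (fun n => rsum (2 ^ n) (fun i =>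
     ind (dyin n i x) * INR (cardT m delta a n i))).

Definition hfun m delta a (x : R) : R :=
  rsum (S m) (fun n => rsum (2 ^ n) (fun i =>
     ind (dyin n i x) * (muI m delta a n i / dlen n))).

(* P(I,s,b) with I = (pn, pi), s = (m - pn, pj) *)
Record Par := mkPar { pn : nat; pi : nat; pj : nat; pb : R }.

Definition inRR m delta a (P : Par) : Prop :=
  (pn P <= m)%nat /\ dyadic_ok (pn P) (pi P) /\ inS m delta a (pn P) (pi P) (pj P).

Definition inPar (m : nat) (P : Par) (x y : R) : Prop :=
  dyin (pn P) (pi P) x /\
  pb P <= y - center (m - pn P) (pj P) * x < pb P + wid m.

Definition Lpar (P : Par) : R := dlen (pn P).

Definition slope_sup (m : nat) (P P' : Par) : Prop :=
  dsub (m - pn P) (pj P) (m - pn P') (pj P').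

Definition count_at (m : nat) (R1 : list Par) (x y : R) : nat :=
  length (filter (fun P => decb (inPar m P x y)) R1).

From Pilot Require Import Defs.
From Stdlib Require Import Reals List Lra Lia Classical ClassicalEpsilon.
Open Scope R_scope.
Import Defs.

(* Both inequalities are pointwise statements about the dyadic intervals
   I containing x.
   - g <= h/delta: every slope s in T(I) lies in S(I), so its population
     satisfies mu_I^s >= delta |I|; summing over T(I) gives
     delta |I| #T(I) <= mu_I, and summing over I containing x gives the claim.
   - count <= g: g(x) is the number of pairs (I,s) with x in I and s in T(I)
     (the list [Tpairs]).  By the recursive definition of T, every slope of
     S(I) contains a slope of T(K) for some K containing I ([T_covers_S]),
     so every parallelogram R through (x,y) has a witness pair (I,s) with
     s inside slope(R).  Two parallelograms through (x,y) sharing a witness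
     have nested slopes (dyadic intervals meeting in a point are nested), which
     the separation hypothesis forbids; hence choosing witnesses is injective
     ([length_le_of_witness]). *)

Definition lsum {A : Type} (l : list A) (f : A -> R) : R :=
  fold_right Rplus 0 (map f l).

Lemma lsum_le {A : Type} (l : list A) (f g : A -> R) :
  (forall k, In k l -> f k <= g k) -> lsum l f <= lsum l g.
Proof.
  unfold lsum; induction l as [|k l IH]; simpl; intros H; [lra|].
  apply Rplus_le_compat; auto.
Qed.

Lemma lsum_scal {A : Type} (l : list A) (c : R) (f : A -> R) :
  lsum l (fun k => c * f k) = c * lsum l f.
Proof. unfold lsum; induction l; simpl; [ring|]. rewrite IHl; ring. Qed.

Lemma decb_true (P : Prop) : decb P = true <-> P.
Proof. unfold decb; destruct excluded_middle_informative; split; easy. Qed.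

Lemma INR_length_filter {A : Type} (l : list A) (P : A -> Prop) :
  INR (length (filter (fun j => decb (P j)) l)) = lsum l (fun j => ind (P j)).
Proof.
  unfold lsum; induction l as [|b l IH]; simpl; [reflexivity|].
  unfold decb at 1, ind at 1.
  destruct excluded_middle_informative; cbn [length]; rewrite ?S_INR, IH; ring.
Qed.

Lemma INR_length_flat_map {A B : Type} (F : A -> list B) (l : list A) :
  INR (length (flat_map F l)) = lsum l (fun k => INR (length (F k))).
Proof.
  unfold lsum; induction l; simpl; [reflexivity|].
  rewrite length_app, plus_INR, IHl; reflexivity.
Qed.

Lemma rsum_le (n : nat) (f g : nat -> R) :
  (forall k, f k <= g k) -> rsum n f <= rsum n g.
Proof. intros H; apply (lsum_le (seq 0 n)); auto. Qed.

Lemma rsum_scal (n : nat) (c : R) (f : nat -> R) :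
  rsum n (fun k => c * f k) = c * rsum n f.
Proof. exact (lsum_scal (seq 0 n) c f). Qed.

Lemma INR_cnt (n : nat) (P : nat -> Prop) : INR (cnt n P) = rsum n (fun j => ind (P j)).
Proof. exact (INR_length_filter (seq 0 n) P). Qed.

Lemma length_le_of_witness {A B : Type} (W : A -> B -> Prop)
  (L : list A) (L' : list B) (b0 : B) :
  NoDup L ->
  (forall a, In a L -> exists b, In b L' /\ W a b) ->
  (forall a a' b, In a L -> In a' L -> W a b -> W a' b -> a = a') ->
  (length L <= length L')%nat.
Proof.
  intros HL Hex Huniq.
  set (f a := epsilon (inhabits b0) (fun b => In b L' /\ W a b)).
  assert (Hf : forall a, In a L -> In (f a) L' /\ W a (f a))
    by (intros a Ha; apply epsilon_spec, Hex, Ha).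
  rewrite <- (length_map f L). apply NoDup_incl_length.
  - apply NoDup_map_NoDup_ForallPairs; [|exact HL].
    intros a a' Ha Ha' E.
    apply (Huniq a a' (f a) Ha Ha'); [apply Hf, Ha|rewrite E; apply Hf, Ha'].
  - intros b Hb. apply in_map_iff in Hb as [a [<- Ha]]. apply Hf, Ha.
Qed.

Lemma pow2_pos (k : nat) : 0 < 2 ^ k.
Proof. apply pow_lt; lra. Qed.

Lemma dyin_scaled (k j : nat) (z : R) :
  dyin k j z <-> INR j <= z * 2 ^ k < INR j + 1.
Proof.
  unfold dyin. pose proof (pow2_pos k) as Hk.
  assert (Hinv : 0 < / 2 ^ k) by (apply Rinv_0_lt_compat; exact Hk).
  assert (E : forall u, u / 2 ^ k * 2 ^ k = u) by (intro; field; lra).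
  assert (E' : forall u, u * 2 ^ k / 2 ^ k = u) by (intro; field; lra).
  split; intros [H1 H2]; split.
  - rewrite <- (E (INR j)). apply Rmult_le_compat_r; lra.
  - rewrite <- (E (INR j + 1)). apply Rmult_lt_compat_r; lra.
  - rewrite <- (E' z). apply Rmult_le_compat_r; lra.
  - rewrite <- (E' z). apply Rmult_lt_compat_r; lra.
Qed.

Lemma dyin_left_end (k j : nat) : dyin k j (INR j / 2 ^ k).
Proof.
  apply dyin_scaled. pose proof (pow2_pos k).
  replace (INR j / 2 ^ k * 2 ^ k) with (INR j) by (field; lra). lra.
Qed.

Lemma dsub_refl (k j : nat) : dsub k j k j.
Proof. intros w H; exact H. Qed.

Lemma dyin_nested (k j k' j' : nat) (z : R) :
  (k <= k')%nat -> dyin k j z -> dyin k' j' z -> dsub k j k' j'.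
Proof.
  intros Hk Hz Hz' w Hw. rewrite dyin_scaled in Hz, Hz', Hw |- *.
  set (d := (k' - k)%nat).
  assert (E : 2 ^ k' = 2 ^ k * INR (2 ^ d))
    by (rewrite pow_INR, <- pow_add; f_equal; unfold d; lia).
  rewrite E in Hz', Hw.
  assert (Hd : 0 < INR (2 ^ d)) by (rewrite pow_INR; apply pow2_pos).
  assert (Hlo : (j * 2 ^ d <= j')%nat).
  { apply Nat.lt_succ_r, INR_lt. rewrite mult_INR, S_INR. nra. }
  assert (Hhi : (j' + 1 <= (j + 1) * 2 ^ d)%nat).
  { enough (j' < (j + 1) * 2 ^ d)%nat by lia.
    apply INR_lt. rewrite mult_INR, plus_INR. simpl (INR 1). nra. }
  apply le_INR in Hlo, Hhi. rewrite mult_INR in Hlo, Hhi.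
  rewrite !plus_INR in Hhi. simpl (INR 1) in Hhi.
  split; nra.
Qed.

Lemma Lpar_le (P P' : Par) : Lpar P <= Lpar P' -> (pn P' <= pn P)%nat.
Proof.
  unfold Lpar, dlen. intros H.
  destruct (Nat.le_gt_cases (pn P') (pn P)) as [|Hlt]; [assumption|exfalso].
  assert (2 ^ pn P < 2 ^ pn P') by (apply Rlt_pow; [lra|lia]).
  pose proof (pow2_pos (pn P)).
  assert (/ 2 ^ pn P' < / 2 ^ pn P) by (apply Rinv_lt_contravar; nra). lra.
Qed.

Lemma slopes_nested (m k j : nat) (P P' : Par) :
  dsub (m - pn P) (pj P) k j -> dsub (m - pn P') (pj P') k j ->
  Lpar P <= Lpar P' -> slope_sup m P P'.
Proof.
  intros HP HP' Hle. apply Lpar_le in Hle.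
  pose proof (dyin_left_end k j) as Hz.
  apply (dyin_nested _ _ _ _ (INR j / 2 ^ k)); [lia|apply HP, Hz|apply HP', Hz].
Qed.

Section TreeSlopes.
Variables (m : nat) (delta : R) (a : nat -> nat -> R).

Lemma Tpre_below (p n i j : nat) :
  (n < p)%nat -> Tpre m delta a p n i j <-> inT m delta a n i j.
Proof.
  revert n i j; induction p as [|p IH]; intros n i j Hn; [lia|].
  destruct (Nat.lt_ge_cases n p) as [Hl|Hg].
  - rewrite <- (IH n i j Hl). cbn [Tpre]. apply Nat.ltb_lt in Hl. rewrite Hl. tauto.
  - replace n with p by lia. reflexivity.
Qed.

Lemma inT_unfold (n i j : nat) :
  inT m delta a n i j <-> inS m delta a n i j /\
  ~ (exists n' i' j', (n' < n)%nat /\ dyadic_ok n' i' /\ dsub n' i' n i /\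
       inT m delta a n' i' j' /\ dsub (m - n) j (m - n') j').
Proof.
  unfold inT at 1. cbn [Tpre]. rewrite Nat.ltb_irrefl, Nat.eqb_refl.
  split; intros [HS HK]; split; try exact HS;
    intros (n' & i' & j' & H1 & H2 & H3 & H4 & H5); apply HK; exists n', i', j'.
  - refine (conj H1 (conj H2 (conj H3 (conj _ H5)))). apply (Tpre_below n); assumption.
  - refine (conj H1 (conj H2 (conj H3 (conj _ H5)))). apply (Tpre_below n); assumption.
Qed.

Lemma inT_inS (n i j : nat) : inT m delta a n i j -> inS m delta a n i j.
Proof. intros HT; apply inT_unfold in HT; apply HT. Qed.

Lemma T_covers_S (n i j : nat) :
  dyadic_ok n i -> inS m delta a n i j ->
  exists n' i' j', (n' <= n)%nat /\ dyadic_ok n' i' /\ dsub n' i' n i /\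
    inT m delta a n' i' j' /\ dsub (m - n) j (m - n') j'.
Proof.
  intros Hi HS.
  destruct (classic (inT m delta a n i j)) as [HT|HT].
  - exists n, i, j. auto using dsub_refl.
  - apply NNPP; intros Hno; apply HT, inT_unfold; split; [exact HS|].
    intros (n' & i' & j' & H1 & H2 & H3 & H4 & H5).
    apply Hno; exists n', i', j'. split; [lia|tauto].
Qed.

(* Each slope of T(I) carries mass at least delta |I|, so #T(I) <= mu_I / (delta |I|). *)
Lemma cardT_le_mass (n i : nat) :
  0 < delta -> INR (cardT m delta a n i) <= / delta * (muI m delta a n i / dlen n).
Proof.
  intros Hd. unfold cardT, muI, dlen. rewrite INR_cnt.
  assert (Hmass : delta * rsum (2 ^ (m - n)) (fun j => ind (inT m delta a n i j))
     <= 2 ^ n * rsum (2 ^ (m - n)) (fun j => ind (inT m delta a n i j) * musub m a n i (m - n) j)).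
  { rewrite <- !rsum_scal. apply rsum_le; intros j.
    unfold ind; destruct excluded_middle_informative as [HT|]; [|lra].
    apply inT_inS in HT as [_ HPop]. unfold Pop, dlen in HPop.
    rewrite Rinv_inv in HPop. lra. }
  unfold Rdiv; rewrite Rinv_inv.
  apply Rmult_le_reg_l with delta; [lra|].
  rewrite <- Rmult_assoc, Rinv_r, Rmult_1_l by lra. lra.
Qed.

Lemma g_le_h (x : R) : 0 < delta -> gfun m delta a x <= / delta * hfun m delta a x.
Proof.
  intros Hd. unfold gfun, hfun.
  rewrite <- rsum_scal; apply rsum_le; intros n.
  rewrite <- rsum_scal; apply rsum_le; intros i.
  pose proof (cardT_le_mass n i Hd).
  unfold ind; destruct excluded_middle_informative; nra.
Qed.

Definition Tpairs (x : R) : list (nat * nat * nat) :=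
  flat_map (fun n => flat_map (fun i =>
    if decb (dyin n i x)
    then map (fun j => (n, i, j))
           (filter (fun j => decb (inT m delta a n i j)) (seq 0 (2 ^ (m - n))))
    else nil) (seq 0 (2 ^ n))) (seq 0 (S m)).

Lemma Tpairs_length (x : R) : INR (length (Tpairs x)) = gfun m delta a x.
Proof.
  unfold Tpairs, gfun, rsum. rewrite INR_length_flat_map. unfold lsum; f_equal.
  apply map_ext; intro n. rewrite INR_length_flat_map. unfold lsum; f_equal.
  apply map_ext; intro i. unfold cardT, cnt, decb at 1, ind.
  destruct excluded_middle_informative; simpl; [rewrite length_map|]; ring.
Qed.

Lemma Tpairs_intro (x : R) (n i j : nat) :
  (n <= m)%nat -> dyadic_ok n i -> dyin n i x -> (j < 2 ^ (m - n))%nat ->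
  inT m delta a n i j -> In (n, i, j) (Tpairs x).
Proof.
  intros Hn Hi Hx Hj HT. apply in_flat_map. exists n; split; [apply in_seq; lia|].
  apply in_flat_map. exists i; split; [apply in_seq; unfold dyadic_ok in Hi; lia|].
  assert (Hb : decb (dyin n i x) = true) by (apply decb_true; exact Hx).
  rewrite Hb. apply in_map_iff. exists j; split; [reflexivity|].
  apply filter_In; split; [apply in_seq; lia|apply decb_true; exact HT].
Qed.

Definition witness (P : Par) (q : nat * nat * nat) : Prop :=
  dsub (m - pn P) (pj P) (m - fst (fst q)) (snd q).

Lemma witness_exists (x y : R) (P : Par) :
  inRR m delta a P -> inPar m P x y -> exists q, In q (Tpairs x) /\ witness P q.
Proof.
  intros (Hn & Hi & HS) (Hx & _).
  destruct (T_covers_S _ _ _ Hi HS) as (n' & i' & j' & Hle & Hi' & Hsub & HT & Hs).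
  exists (n', i', j'); split; [|exact Hs].
  pose proof (inT_inS _ _ _ HT) as [Hj _].
  apply Tpairs_intro; [lia|exact Hi'|apply Hsub, Hx|exact Hj|exact HT].
Qed.

(* Choosing a witness for each parallelogram through (x,y) is injective. *)
Lemma count_le_g (R1 : list Par) (x y : R) :
  (forall P, In P R1 -> inRR m delta a P) -> NoDup R1 ->
  (forall P P', In P R1 -> In P' R1 -> P <> P' ->
      (exists x y, inPar m P x y /\ inPar m P' x y) ->
      Lpar P <= Lpar P' -> ~ slope_sup m P P') ->
  INR (count_at m R1 x y) <= gfun m delta a x.
Proof.
  intros HR1 Hnd Hsep. rewrite <- Tpairs_length. apply le_INR.
  assert (Hthrough : forall P, In P (filter (fun P => decb (inPar m P x y)) R1) ->
            In P R1 /\ inPar m P x y).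
  { intros P HP; apply filter_In in HP as [HP Hb]; split; [|apply decb_true]; assumption. }
  assert (Hshare : forall P P' q, In P R1 -> In P' R1 -> inPar m P x y -> inPar m P' x y ->
            P <> P' -> witness P q -> witness P' q -> Lpar P <= Lpar P' -> False).
  { intros P P' q I1 I2 X1 X2 Hne Hq Hq' Hle.
    apply (Hsep P P' I1 I2 Hne (ex_intro _ x (ex_intro _ y (conj X1 X2))) Hle).
    exact (slopes_nested _ _ _ _ _ Hq Hq' Hle). }
  apply (length_le_of_witness witness _ _ (0, 0, 0)%nat); [apply NoDup_filter, Hnd| |].
  - intros P HP; destruct (Hthrough P HP) as [I1 X1]. exact (witness_exists x y P (HR1 P I1) X1).
  - intros P P' q HP HP' Hq Hq'.
    destruct (Hthrough P HP) as [I1 X1], (Hthrough P' HP') as [I2 X2].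
    apply NNPP; intros Hne.
    destruct (Rle_or_lt (Lpar P) (Lpar P')) as [Hle|Hlt].
    + exact (Hshare P P' q I1 I2 X1 X2 Hne Hq Hq' Hle).
    + exact (Hshare P' P q I2 I1 X2 X1 (not_eq_sym Hne) Hq' Hq (Rlt_le _ _ Hlt)).
Qed.

End TreeSlopes.

Theorem lemma4 (m : nat) (delta : R) (a : nat -> nat -> R)
  (Hm : (1 <= m)%nat) (Hd0 : 0 < delta) (Hd1 : delta <= 1)
  (Ha0 : forall c t, (c < 2 ^ m)%nat -> (t < 2 ^ m)%nat -> 0 <= a c t)
  (Ha1 : forall c, (c < 2 ^ m)%nat -> rsum (2 ^ m) (a c) = wid m)
  (R1 : list Par)
  (HR1 : forall P, In P R1 -> inRR m delta a P)
  (Hnd : NoDup R1)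
  (Hsep : forall P P', In P R1 -> In P' R1 -> P <> P' ->
      (exists x y, inPar m P x y /\ inPar m P' x y) ->
      Lpar P <= Lpar P' -> ~ slope_sup m P P')
  (x y : R) (Hx : 0 <= x < 1) :
  INR (count_at m R1 x y) <= gfun m delta a x /\
  gfun m delta a x <= / delta * hfun m delta a x.
Proof.
  split.
  - apply count_le_g; assumption.
  - apply g_le_h; assumption.
Qed.
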